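(* For every integer $m\ge0$ and every $n\ge1$, $$v_n\!\left(1,m,\tfrac1q,q\right)=q^{\binom n2}\,\frac{[2m+n-1]\,[2m+n-2]\cdots[2m+1]}{[2m+2n-2]\,[2m+2n-4]\cdots[2m+2]},$$ where numerator and denominator each have $n-1$ factors (empty products equal $1$).
   Context: $q$ is an indeterminate; $[n]=\frac{1-q^n}{1-q}$, $[n]!=[1]\cdots[n]$, $[0]!=1$, $(a;q)_n=(1-a)(1-qa)\cdots(1-q^{n-1}a)$, $(a;q)_0=1$. For an integer $m\ge 0$ and indeterminates $x,s$, $$v_n(x,m,s,q)=\sum_{k=0}^{\lfloor n/2\rfloor}(-s)^kq^{k^2}\frac{[n]!}{[k]!\,[n-2k]!}\,\frac{[m+n-k-1]!}{[m+n-1]!}\,\frac{1}{(-q;q)_k\,(-q^{n+m-k};q)_k}\,x^{n-2k}\quad(n\ge1),\qquad v_0=1.$$ *)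

From HB Require Import structures.
From mathcomp Require Import all_boot all_order all_algebra.
Set Implicit Arguments. Unset Strict Implicit. Unset Printing Implicit Defensive.
Import Order.TTheory GRing.Theory Num.Theory.
Local Open Scope ring_scope.

Section QDefs.
Variable F : fieldType.
Variable q : F.

Definition qint (n : nat) : F := (1 - q ^+ n) / (1 - q).
Definition qfact (n : nat) : F := \prod_(i < n) qint i.+1.
Definition qpoch (a : F) (n : nat) : F := \prod_(i < n) (1 - q ^+ i * a).

Definition v (x : F) (m : nat) (s : F) (n : nat) : F :=
  if n is 0 then 1 else
  \sum_(k < (n %/ 2).+1)
     (- s) ^+ k * q ^+ (k ^ 2)
     * (qfact n / (qfact k * qfact (n - 2 * k)))
     * (qfact (m + n - k - 1) / qfact (m + n - 1))
     / (qpoch (- q) k * qpoch (- q ^+ (n + m - k)) k)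
     * x ^+ (n - 2 * k).
End QDefs.

Definition qX : {fraction {poly rat}} := tofrac ('X : {poly rat}).

From HB Require Import structures.
From mathcomp Require Import all_boot all_order all_algebra.
From mathcomp Require Import ring zify.
Import GRing.Theory.
Local Open Scope ring_scope.

(* At x = 1, s = 1/q the k-th summand of v_n becomes
     t(n,k) = (-1)^k q^(k^2-k) (q^(n-2k+1); q)_(2k) / ((q^2; q^2)_k (q^(2(n+m-k)); q^2)_k),
   a proper term in (n, k).  Both sides then satisfy F(n+1) = rho(n) F(n) with
   rho(n) = q^n [2m+n] / [2m+2n], and they agree at n = 1.  For the sum this is a
   Wilf-Zeilberger telescoping: with the certificate c(k) = (1 - q^(2k)) / (1 - q^(n+1)),
     t(n+1,k) (1 - c(k)) + c(k+1) t(n+1,k+1) = rho(n) t(n,k),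
   and c(0) = 0 while t(n+1,k) vanishes for large k. *)

Lemma sum_nat_widen0 (V : nmodType) (f : nat -> V) a b : (a <= b)%N ->
    (forall k, (a <= k < b)%N -> f k = 0) ->
  \sum_(0 <= k < a) f k = \sum_(0 <= k < b) f k.
Proof.
move=> le_ab f0; rewrite (big_cat_nat (leq0n a) le_ab) /=.
by rewrite [X in _ = _ + X]big1_seq ?addr0 // => k /andP[_]; rewrite mem_index_iota => /f0.
Qed.

Section QSeriesIdentity.
Variables (F : fieldType) (q : F).
Hypothesis q_neq0 : q != 0.
Hypothesis qexp_neq1 : forall j, (0 < j)%N -> q ^+ j != 1.

Lemma one_sub_qexp_neq0 j : (0 < j)%N -> 1 - q ^+ j != 0.
Proof. by move=> /qexp_neq1; rewrite subr_eq0 eq_sym. Qed.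

Lemma one_sub_q_neq0 : 1 - q != 0.
Proof. by rewrite -[q]expr1 one_sub_qexp_neq0. Qed.

Lemma qint_neq0 a : (0 < a)%N -> qint q a != 0.
Proof.
by move=> a_gt0; rewrite /qint mulf_neq0 ?invr_eq0 ?one_sub_qexp_neq0 ?one_sub_q_neq0.
Qed.

Lemma qfact_neq0 a : qfact q a != 0.
Proof. by apply/prodf_neq0 => i _; exact: qint_neq0. Qed.

(* By truncated subtraction the factor [i = a] is [1 - q ^+ 0 = 0]. *)
Definition qfalling (a j : nat) : F := \prod_(i < j) (1 - q ^+ (a - i)).

Definition qpoch2 (c k : nat) : F := \prod_(i < k) (1 - q ^+ (2 * (c + i))).

Definition qsign (k : nat) : F := (-1) ^+ k * q ^+ (k * k - k).

Lemma qfalling0 a : qfalling a 0 = 1.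
Proof. by rewrite /qfalling big_ord0. Qed.

Lemma qfallingSl a j : qfalling a.+1 j.+1 = (1 - q ^+ a.+1) * qfalling a j.
Proof. by rewrite /qfalling big_ord_recl subn0. Qed.

Lemma qfallingSr a j : qfalling a j.+1 = qfalling a j * (1 - q ^+ (a - j)).
Proof. by rewrite /qfalling big_ord_recr. Qed.

Lemma qfalling_eq0 a j : (a < j)%N -> qfalling a j = 0.
Proof.
elim: j => // j IHj; rewrite ltnS leq_eqVlt qfallingSr => /orP[/eqP->|/IHj->].
  by rewrite subnn expr0 subrr mulr0.
by rewrite mul0r.
Qed.

Lemma qpoch2Sr c k : qpoch2 c k.+1 = qpoch2 c k * (1 - q ^+ (2 * (c + k))).
Proof. by rewrite /qpoch2 big_ord_recr. Qed.

Lemma qpoch2Sl c k : qpoch2 c k.+1 = (1 - q ^+ (2 * c)) * qpoch2 c.+1 k.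
Proof.
rewrite /qpoch2 big_ord_recl addn0; congr (_ * _).
by apply: eq_bigr => i _; rewrite lift0 addnS.
Qed.

Lemma qpoch2_neq0 c k : (0 < c)%N -> qpoch2 c k != 0.
Proof. by move=> c_gt0; apply/prodf_neq0 => i _; apply: one_sub_qexp_neq0; lia. Qed.

Lemma qpoch2_shift c k : (0 < c)%N ->
  qpoch2 c.+1 k = qpoch2 c k * (1 - q ^+ (2 * (c + k))) / (1 - q ^+ (2 * c)).
Proof.
move=> c_gt0; rewrite -qpoch2Sr qpoch2Sl mulrAC divff ?mul1r //.
by apply: one_sub_qexp_neq0; lia.
Qed.

Lemma qsignS k : qsign k.+1 = - qsign k * q ^+ (2 * k).
Proof.
rewrite /qsign exprS (_ : (k.+1 * k.+1 - k.+1 = (k * k - k) + 2 * k)%N); last by nia.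
by rewrite exprD; ring.
Qed.

Definition vterm (m n k : nat) : F :=
  qsign k * qfalling n (2 * k) / (qpoch2 1 k * qpoch2 (n + m - k) k).

Definition vsum (m n : nat) : F := \sum_(0 <= k < n.+1) vterm m n k.

Definition vclosed (m n : nat) : F := q ^+ 'C(n, 2) *
  ((\prod_(1 <= i < n) qint q (2 * m + i)) / (\prod_(1 <= i < n) qint q (2 * m + 2 * i))).

Definition vclosed_ratio (m n : nat) : F :=
  q ^+ n * (qint q (2 * m + n) / qint q (2 * m + 2 * n)).

Definition wz_cert (n k : nat) : F := (1 - q ^+ (2 * k)) / (1 - q ^+ n.+1).

Lemma vterm_eq0 m n k : (n < 2 * k)%N -> vterm m n k = 0.
Proof. by move=> lt_n_2k; rewrite /vterm qfalling_eq0 // mulr0 mul0r. Qed.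

Lemma vterm_Sn m n k : (0 < n + m)%N -> (2 * k <= n)%N ->
  vterm m n.+1 k = vterm m n k * (1 - q ^+ n.+1) / (1 - q ^+ (n.+1 - 2 * k))
                   * (1 - q ^+ (2 * (n + m - k))) / (1 - q ^+ (2 * (n + m))).
Proof.
move=> nm_gt0 le_2k_n.
have c_gt0 : (0 < n + m - k)%N by lia.
have nz1 : 1 - q ^+ (n.+1 - 2 * k) != 0 by apply: one_sub_qexp_neq0; lia.
have nz2 : 1 - q ^+ (2 * (n + m - k)) != 0 by apply: one_sub_qexp_neq0; lia.
have nz3 : 1 - q ^+ (2 * (n + m)) != 0 by apply: one_sub_qexp_neq0; lia.
have fall : qfalling n.+1 (2 * k) =
    (1 - q ^+ n.+1) * qfalling n (2 * k) / (1 - q ^+ (n.+1 - 2 * k)).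
  by rewrite -qfallingSl (qfallingSr n.+1 (2 * k)) mulfK.
have poch : qpoch2 (n.+1 + m - k) k =
    qpoch2 (n + m - k) k * (1 - q ^+ (2 * (n + m))) / (1 - q ^+ (2 * (n + m - k))).
  rewrite (_ : (n.+1 + m - k = (n + m - k).+1)%N) ?qpoch2_shift //; last lia.
  by rewrite (_ : (n + m - k + k = n + m)%N) //; lia.
rewrite /vterm fall poch; field.
by rewrite nz1 nz2 nz3 qpoch2_neq0 // qpoch2_neq0.
Qed.

Lemma vterm_SnS m n k : (0 < n + m)%N -> (2 * k <= n)%N ->
  vterm m n.+1 k.+1 = - vterm m n k * q ^+ (2 * k) * (1 - q ^+ n.+1) * (1 - q ^+ (n - 2 * k))
                      / ((1 - q ^+ (2 * k.+1)) * (1 - q ^+ (2 * (n + m)))).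
Proof.
move=> nm_gt0 le_2k_n.
have nz1 : 1 - q ^+ (2 * k.+1) != 0 by apply: one_sub_qexp_neq0; lia.
have nz2 : 1 - q ^+ (2 * (n + m)) != 0 by apply: one_sub_qexp_neq0; lia.
have fall : qfalling n.+1 (2 * k.+1) =
    (1 - q ^+ n.+1) * qfalling n (2 * k) * (1 - q ^+ (n - 2 * k)).
  by rewrite (_ : (2 * k.+1 = (2 * k).+2)%N) ?qfallingSl ?qfallingSr ?mulrA //; lia.
have poch : qpoch2 (n.+1 + m - k.+1) k.+1 = qpoch2 (n + m - k) k * (1 - q ^+ (2 * (n + m))).
  by rewrite addSn subSS qpoch2Sr subnK //; lia.
rewrite /vterm fall poch qpoch2Sr add1n qsignS; field.
by rewrite nz1 nz2 qpoch2_neq0 ?qpoch2_neq0 //; lia.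
Qed.

Lemma vterm_step_le m n k : (0 < n + m)%N -> (2 * k <= n)%N ->
  vterm m n.+1 k * (1 - wz_cert n k) + wz_cert n k.+1 * vterm m n.+1 k.+1 =
  vclosed_ratio m n * vterm m n k.
Proof.
move=> nm_gt0 le_2k_n.
(* With n = 2k + t everything is a rational function of q, q^(2k), q^t and q^(2m). *)
have [t def_n] : exists t, n = (2 * k + t)%N by exists (n - 2 * k)%N; lia.
set K := q ^+ (2 * k); set T := q ^+ t; set M := q ^+ (2 * m).
have e1 : q ^+ n.+1 = q * K * T by rewrite -exprS -!exprD; congr (_ ^+ _); lia.
have e2 : q ^+ (n.+1 - 2 * k) = q * T by rewrite -exprS; congr (_ ^+ _); lia.
have e3 : q ^+ (2 * (n + m - k)) = K * T * T * M by rewrite -!exprD; congr (_ ^+ _); lia.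
have e4 : q ^+ (2 * (n + m)) = K * K * T * T * M by rewrite -!exprD; congr (_ ^+ _); lia.
have e5 : q ^+ (2 * k.+1) = q ^+ 2 * K by rewrite -!exprD; congr (_ ^+ _); lia.
have e6 : q ^+ (n - 2 * k) = T by congr (_ ^+ _); lia.
have e7 : q ^+ (2 * m + n) = K * T * M by rewrite -!exprD; congr (_ ^+ _); lia.
have e8 : q ^+ (2 * m + 2 * n) = K * K * T * T * M by rewrite -!exprD; congr (_ ^+ _); lia.
have e9 : q ^+ n = K * T by rewrite -!exprD; congr (_ ^+ _); lia.
have nz1 := one_sub_q_neq0.
have nz2 : 1 - q * K * T != 0 by rewrite -e1 one_sub_qexp_neq0.
have nz3 : 1 - q * T != 0 by rewrite -e2 one_sub_qexp_neq0 //; lia.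
have nz4 : 1 - q ^+ 2 * K != 0 by rewrite -e5 one_sub_qexp_neq0.
have nz5 : 1 - K * K * T * T * M != 0 by rewrite -e4 one_sub_qexp_neq0 //; lia.
rewrite vterm_Sn // vterm_SnS // /wz_cert /vclosed_ratio /qint.
rewrite e1 e2 e3 e4 e5 e6 e7 e8 e9 -/K.
by field; rewrite nz1 nz2 nz3 nz4 nz5.
Qed.

Lemma vterm_step m n k : (0 < n + m)%N ->
  vterm m n.+1 k * (1 - wz_cert n k) + wz_cert n k.+1 * vterm m n.+1 k.+1 =
  vclosed_ratio m n * vterm m n k.
Proof.
move=> nm_gt0; have [le_2k_n | lt_n_2k] := leqP (2 * k) n.
  exact: vterm_step_le.
rewrite (vterm_eq0 m n k) // (vterm_eq0 m n.+1 k.+1) ?mulr0 ?addr0; last lia.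
have [eq_2k | lt] : (2 * k = n.+1)%N \/ (n.+1 < 2 * k)%N by lia.
  by rewrite /wz_cert eq_2k divff ?subrr ?mulr0 // one_sub_qexp_neq0.
by rewrite vterm_eq0 ?mul0r.
Qed.

Lemma vsumS m n : (0 < n + m)%N -> vsum m n.+1 = vclosed_ratio m n * vsum m n.
Proof.
move=> nm_gt0; pose g k := wz_cert n k * vterm m n.+1 k.
have -> : vsum m n = \sum_(0 <= k < n.+2) vterm m n k.
  by apply: sum_nat_widen0 => // k; rewrite ltnS => /andP[? ?]; apply: vterm_eq0; lia.
rewrite mulr_sumr.
under eq_bigr do
  rewrite -vterm_step // mulrBr mulr1 addrAC -addrA (mulrC (vterm _ _ _)) -/(g _) -/(g _).
rewrite big_split telescope_sumr //= /g vterm_eq0 1?mulr0; last lia.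
by rewrite /wz_cert muln0 expr0 subrr !mul0r subr0 addr0.
Qed.

Lemma vclosedS m n : (0 < n)%N -> vclosed m n.+1 = vclosed_ratio m n * vclosed m n.
Proof.
by move=> n_gt0; rewrite /vclosed /vclosed_ratio !big_nat_recr //= binS bin1 exprD invfM; ring.
Qed.

Lemma vsum_eq_vclosed m n : (0 < n)%N -> vsum m n = vclosed m n.
Proof.
elim: n => // -[_ _ | n IHn _].
  rewrite /vsum big_nat_recr //= big_nat1 /vclosed !big_geq // (vterm_eq0 m 1 1) //.
  by rewrite /vterm /qsign qfalling0 /qpoch2 !big_ord0 /= !(expr0, mulr1, invr1, addr0).
by rewrite vsumS // vclosedS // IHn.
Qed.

Lemma qfact_addn c k : qfact q (c + k) = qfact q c * \prod_(i < k) qint q (c + i).+1.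
Proof. by rewrite /qfact big_split_ord. Qed.

Lemma qfact_mul_qfalling a j :
  qfact q (a + j) * (1 - q) ^+ j = qfact q a * qfalling (a + j) j.
Proof.
elim: j => [|j IHj]; first by rewrite addn0 expr0 mulr1 qfalling0 mulr1.
rewrite addnS qfallingSl mulrCA -IHj /qfact big_ord_recr /= /qint (exprSr (1 - q)).
by field; rewrite one_sub_q_neq0.
Qed.

Lemma qfact_ratio_qpoch c k :
  qfact q (c + k) / qfact q c * qpoch q (- q ^+ c.+1) k * (1 - q) ^+ k = qpoch2 c.+1 k.
Proof.
rewrite qfact_addn (mulrAC (qfact q c)) divff ?qfact_neq0 // mul1r.
have -> : (1 - q) ^+ k = \prod_(i < k) (1 - q) by rewrite prodr_const card_ord.
rewrite /qpoch -!big_split; apply: eq_bigr => i _ /=.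
rewrite mulrN -exprD (addnC i) addSn mulnC exprM /qint.
by field; rewrite one_sub_q_neq0.
Qed.

Lemma v_summand_eq m n k : (0 < n)%N -> (2 * k <= n)%N ->
  (- q^-1) ^+ k * q ^+ (k ^ 2)
     * (qfact q n / (qfact q k * qfact q (n - 2 * k)))
     * (qfact q (m + n - k - 1) / qfact q (m + n - 1))
     / (qpoch q (- q) k * qpoch q (- q ^+ (n + m - k)) k)
     * 1 ^+ (n - 2 * k) = vterm m n k.
Proof.
move=> n_gt0 le_2k_n.
have nz1 := one_sub_q_neq0.
have fall := qfact_mul_qfalling (n - 2 * k) (2 * k).
rewrite subnK // in fall.
have poch1 := qfact_ratio_qpoch 0 k.
rewrite add0n /qfact [in X in _ / X]big_ord0 divr1 expr1 -/(qfact q k) in poch1.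
have poch2 := qfact_ratio_qpoch (n + m - k - 1) k.
rewrite (_ : (n + m - k - 1 + k = n + m - 1)%N) in poch2; last lia.
rewrite (_ : ((n + m - k - 1).+1 = n + m - k)%N) in poch2; last lia.
have sign : (- q^-1) ^+ k * q ^+ (k ^ 2) = qsign k.
  rewrite /qsign (_ : (k ^ 2 = (k * k - k) + k)%N); last by nia.
  rewrite -[- q^-1]mulN1r exprMn exprVn exprD.
  by field; exact: expf_neq0.
have nzp1 : qpoch q (- q) k != 0.
  apply: (contraTneq _ (qpoch2_neq0 1 k isT)) => p0.
  by rewrite -poch1 p0 mulr0 mul0r eqxx.
have nzp2 : qpoch q (- q ^+ (n + m - k)) k != 0.
  have c_gt0 : (0 < n + m - k)%N by lia.
  apply: (contraTneq _ (qpoch2_neq0 (n + m - k) k c_gt0)) => p0.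
  by rewrite -poch2 p0 mulr0 mul0r eqxx.
have fallE : qfalling n (2 * k) = qfact q n * (1 - q) ^+ (2 * k) / qfact q (n - 2 * k).
  by rewrite fall mulrC mulKf ?qfact_neq0.
rewrite /vterm fallE sign expr1n mulr1 (addnC m) -poch1 -poch2 (mulnC 2 k) exprM.
by field; rewrite nzp1 nzp2 expf_neq0 // !qfact_neq0.
Qed.

Lemma v_eq_vsum m n : (0 < n)%N -> v q 1 m q^-1 n = vsum m n.
Proof.
case: n => // n _; rewrite /v (eq_bigr (fun k : 'I__ => vterm m n.+1 k)) => [|k _].
  rewrite -(big_mkord xpredT (vterm m n.+1)).
  apply: sum_nat_widen0 => [|k /andP[lt_k _]]; first by rewrite ltnS leq_div.
  by apply: vterm_eq0; move: lt_k; rewrite ltn_divLR //; lia.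
by apply: v_summand_eq => //; have := ltn_ord k; rewrite ltnS leq_divRL //; lia.
Qed.

Theorem v_one_qinv m n : (0 < n)%N -> v q 1 m q^-1 n = vclosed m n.
Proof. by move=> n_gt0; rewrite v_eq_vsum // vsum_eq_vclosed. Qed.

End QSeriesIdentity.

Lemma qX_neq0 : qX != 0.
Proof. by rewrite tofrac_eq0 polyX_eq0. Qed.

Lemma qX_exp_neq1 j : (0 < j)%N -> qX ^+ j != 1.
Proof.
move=> j_gt0; rewrite /qX -rmorphXn -(rmorph1 (@tofrac _)) tofrac_eq.
apply: contraTneq j_gt0 => Xj_eq1.
have := congr1 (fun p : {poly rat} => size p) Xj_eq1.
by rewrite size_polyXn size_poly1 => -[->].
Qed.

Theorem mainTheorem18 (m n : nat) : (1 <= n)%N ->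
  v qX 1 m qX^-1 n =
  qX ^+ 'C(n, 2) *
  ((\prod_(1 <= i < n) qint qX (2 * m + i)) /
   (\prod_(1 <= i < n) qint qX (2 * m + 2 * i))).
Proof. exact: v_one_qinv qX_neq0 qX_exp_neq1 m n. Qed.
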